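(* Let $X \subseteq {}^\omega 2$ and let $D \subseteq \mathbb{S}$ satisfy: (a) $D$ is dense: for every $p\in\mathbb S$ there is $q\le p$ with $q\in D$; (b) $D$ is translation-invariant: for every $p\in\mathbb S$ and $t\in{}^\omega 2$, $p\in D$ iff $p+t\in D$; (c) for every cardinal $\mu<\mathfrak c$ and every family $\{p_\alpha:\alpha<\mu\}\subseteq D$ we have $X\not\subseteq\bigcup_{\alpha<\mu}[p_\alpha]$. Then there is $Y\in s_0$ with $X+Y={}^\omega 2$; i.e., $X$ is not $s_0$-shiftable.
   Context: ${}^\omega 2$ is the Cantor space with bitwise addition modulo $2$, denoted $+$; $\mathfrak c=2^{\aleph_0}$. $\mathbb S$ (Sacks forcing) is the set of perfect subtrees of ${}^{<\omega}2$, ordered by inclusion ($q\le p$ iff $q\subseteq p$); $[p]$ denotes the set of branches of $p$. For $p\in\mathbb S$ and $t\in{}^\omega 2$, $p+t=\{\sigma+t\restriction|\sigma| : \sigma\in p\}$, so $[p+t]=[p]+t$. A set $Y \subseteq {}^\omega 2$ is Marczewski null ($Y \in s_0$) if for every $p\in\mathbb S$ there is $q\le p$ with $[q]\cap Y=\emptyset$. A set $X$ is $s_0$-shiftable if $X+Y\neq{}^\omega 2$ for every $Y\in s_0$. *)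

From mathcomp Require Import all_boot.
Set Implicit Arguments. Unset Strict Implicit. Unset Printing Implicit Defensive.

Definition cantor := nat -> bool.
Definition cadd (x y : cantor) : cantor := fun n => xorb (x n) (y n).

Definition tree := seq bool -> Prop.

Definition initseg (s t : seq bool) : Prop := exists u, t = s ++ u.

Definition perfect (p : tree) : Prop :=
  p [::] /\
  (forall s t, initseg s t -> p t -> p s) /\
  (forall s, p s -> exists t, initseg s t /\ p (rcons t false) /\ p (rcons t true)).

Definition tle (q p : tree) : Prop := forall s, q s -> p s.

Definition restr (x : cantor) (n : nat) : seq bool := mkseq x n.

Definition branch (p : tree) (x : cantor) : Prop := forall n, p (restr x n).

Definition seqadd (s : seq bool) (t : cantor) : seq bool :=
  mkseq (fun i => xorb (nth false s i) (t i)) (size s).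

Definition ttrans (p : tree) (t : cantor) : tree :=
  fun s => exists sigma, p sigma /\ s = seqadd sigma t.

Definition s0 (Y : cantor -> Prop) : Prop :=
  forall p, perfect p -> exists q, perfect q /\ tle q p /\ forall y, branch q y -> ~ Y y.

Definition card_lt (I J : Type) : Prop :=
  (exists f : I -> J, injective f) /\ ~ (exists g : J -> I, injective g).

(* Well-order Cantor space so that every initial segment has size < c, and let
   it index both the points z and (through [decode_tree]) all trees.  By
   transfinite recursion pick at stage z a point x_z of X outside every translate
   q_w + z of an earlier tree, and a tree q_z in D below the z-th tree that
   avoids the earlier points y_w = x_w + w and y_z = x_z + z; fewer than c points
   can be avoided because a perfect tree contains c pairwise disjoint perfect
   subtrees.  Then z = x_z + y_z, and Y = {y_z} is Marczewski null: q_z misses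
   y_w for w <= z by construction, and for w > z because y_w in [q_z] would put
   x_w in [q_z + w]. *)

From mathcomp Require Import all_boot.
From mathcomp Require Import boolp wochoice.
From Stdlib Require Import Inverse_Image.
Set Implicit Arguments. Unset Strict Implicit. Unset Printing Implicit Defensive.

Lemma initsegE (s t : seq bool) : initseg s t <-> prefix s t.
Proof. by split=> [[u ->]|/prefixP //]; apply: prefix_prefix. Qed.

Lemma prefix_shorter (a b c : seq bool) :
  prefix a c -> prefix b c -> size a <= size b -> prefix a b.
Proof. by rewrite !prefixE => /eqP ha /eqP hb hab; rewrite -hb take_takel // ha. Qed.

Lemma prefix_total (a b c : seq bool) :
  prefix a c -> prefix b c -> prefix a b || prefix b a.
Proof.
move=> ha hb; case: (leqP (size a) (size b)) => hab.
  by rewrite (prefix_shorter ha hb hab).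
by rewrite (prefix_shorter hb ha (ltnW hab)) orbT.
Qed.

Lemma prefix_size_eq (a b : seq bool) : prefix a b -> size b <= size a -> a = b.
Proof. by rewrite prefixE => /eqP ha hba; rewrite -{1}ha take_oversize. Qed.

Lemma restr_mono (x : cantor) m n : m <= n -> prefix (restr x m) (restr x n).
Proof.
move=> /subnKC <-; elim: (n - m) => [|k IH]; first by rewrite addn0 prefix_refl.
by rewrite addnS /restr mkseqS (prefix_trans IH) ?prefix_rcons.
Qed.

Lemma restr_ext (x x' : cantor) n :
  (forall i, i < n -> x i = x' i) -> restr x n = restr x' n.
Proof.
elim: n => [//|n IH] h; rewrite /restr !mkseqS h // -/(restr x n) IH // => i.
by move/ltnW; apply: h.
Qed.

Definition splitting (p : tree) (sp : seq bool -> seq bool) :=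
  forall s, p s -> [/\ prefix s (sp s), p (rcons (sp s) false) & p (rcons (sp s) true)].

Lemma perfect_splitting p : perfect p -> exists sp, splitting p sp.
Proof.
case=> _ [_ hspl].
have H s : exists t, p s -> [/\ prefix s t, p (rcons t false) & p (rcons t true)].
  case: (pselect (p s)) => ps; last by exists s.
  by have [t [/initsegE ? []]] := hspl s ps; exists t.
by exists (fun s => sval (cid (H s))) => s; apply: (svalP (cid (H s))).
Qed.

(* The node of p reached from the root by splitting along the bits of u. *)
Definition node (sp : seq bool -> seq bool) (u : seq bool) :=
  foldl (fun s b => rcons (sp s) b) [::] u.

Lemma node_rcons sp u b : node sp (rcons u b) = rcons (sp (node sp u)) b.
Proof. by rewrite /node foldl_rcons. Qed.

Section Slices.
Variables (p : tree) (sp : seq bool -> seq bool).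
Hypotheses (p_perf : perfect p) (p_sp : splitting p sp).

Let p_nil : p [::] := proj1 p_perf.

Lemma node_in u : p (node sp u).
Proof.
elim/last_ind: u => [//|u b IH].
by rewrite node_rcons; have [_ ? ?] := p_sp IH; case: b.
Qed.

Lemma node_prefix_rcons u b : prefix (node sp u) (node sp (rcons u b)).
Proof.
rewrite node_rcons (prefix_trans _ (prefix_rcons _ _)) //.
by have [] := p_sp (node_in u).
Qed.

Lemma node_mono u v : prefix u v -> prefix (node sp u) (node sp v).
Proof.
case/prefixP=> w ->; elim/last_ind: w => [|w b IH]; first by rewrite cats0 prefix_refl.
by rewrite -rcons_cat (prefix_trans IH) ?node_prefix_rcons.
Qed.

Lemma node_comparable_eq u v : size u = size v ->
  prefix (node sp u) (node sp v) || prefix (node sp v) (node sp u) -> u = v.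
Proof.
elim/last_ind: u v => [|u a IH] v; first by case: v.
case/lastP: v => [|v b]; first by rewrite size_rcons.
rewrite !size_rcons => -[hsz] huv.
have euv : u = v.
  apply: IH hsz _; case/orP: huv => h.
    exact: prefix_total (prefix_trans (node_prefix_rcons u a) h) (node_prefix_rcons v b).
  exact: prefix_total (node_prefix_rcons u a) (prefix_trans (node_prefix_rcons v b) h).
subst v; move: huv; rewrite !node_rcons.
have hs : size (rcons (sp (node sp u)) a) = size (rcons (sp (node sp u)) b).
  by rewrite !size_rcons.
case/orP=> /prefix_size_eq; rewrite hs leqnn => /(_ isT) /rcons_inj [] -> //.
Qed.

(* The odd bits of x keep a slice perfect; the even bits make slices for
   different c disjoint. *)
Definition slice (c : cantor) : tree :=
  fun s => exists (x : cantor) n,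
    (forall i, x i.*2 = c i) /\ prefix s (node sp (restr x n)).

Lemma slice_sub c : tle (slice c) p.
Proof.
move=> s [x [n [_ /initsegE hs]]]; have [_ [p_cl _]] := p_perf.
exact: p_cl hs (node_in _).
Qed.

Lemma slice_perfect c : perfect (slice c).
Proof.
split.
  by exists (fun i => c i./2), 0; split=> [i|]; rewrite ?doubleK ?prefix0s.
split.
  move=> s t /initsegE hst [x [n [hx ht]]]; exists x, n.
  by split=> //; apply: prefix_trans hst ht.
move=> s [x [n [hx hs]]].
(* m is odd, so flipping bit m of x keeps the even bits and splits the node. *)
pose m := n.*2.+1; pose t := sp (node sp (restr x m)).
have slice_next (y : cantor) : (forall i, y i.*2 = c i) -> restr y m = restr x m ->
    slice c (rcons t (y m)).
  move=> hy hyx; exists y, m.+1; split=> //.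
  by rewrite /restr mkseqS node_rcons -/(restr y m) hyx prefix_refl.
pose x' i := if i == m then ~~ x m else x i.
have hx' i : x' i.*2 = c i.
  rewrite /x'; case: eqP => [him|_]; last exact: hx.
  by move: (congr1 odd him); rewrite /= !odd_double.
have hx'x : restr x' m = restr x m.
  by apply: restr_ext => i him; rewrite /x' (ltn_eqF him).
have hnm : n <= m by rewrite /m -addnn -addnS leq_addr.
exists t; split.
  apply/initsegE; apply: (prefix_trans hs).
  apply: (prefix_trans (node_mono (restr_mono x hnm))).
  by have [] := p_sp (node_in (restr x m)).
have := slice_next x hx erefl; have := slice_next x' hx' hx'x.
by rewrite /x' eqxx; case: (x m).
Qed.

Lemma slice_branch_prefix K : exists M, forall d y, branch (slice d) y ->
  exists2 x : cantor, (forall i, x i.*2 = d i) & prefix (node sp (restr x K)) (restr y M).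
Proof.
pose M := \max_(u : K.-tuple bool) size (node sp u).
exists M => d y /(_ M) [x [n [hx hy]]]; exists x => //.
have hK := node_mono (restr_mono x (leq_maxr n K)).
have hn := node_mono (restr_mono x (leq_maxl n K)).
apply: prefix_shorter hK (prefix_trans hy hn) _.
have xK : size (restr x K) == K by rewrite size_mkseq.
rewrite size_mkseq.
by have := @leq_bigmax _ (fun u : K.-tuple bool => size (node sp u)) (Tuple xK).
Qed.

Lemma slice_disjoint c c' k y : c k <> c' k ->
  branch (slice c) y -> branch (slice c') y -> False.
Proof.
move=> hcc' hy hy'; have [M hM] := slice_branch_prefix k.*2.+1.
have [x hx hxy] := hM _ _ hy; have [x' hx' hx'y] := hM _ _ hy'.
have /node_comparable_eq : size (restr x k.*2.+1) = size (restr x' k.*2.+1).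
  by rewrite !size_mkseq.
move=> /(_ (prefix_total hxy hx'y)) /(congr1 (nth false ^~ k.*2)).
by rewrite !nth_mkseq // hx hx'.
Qed.

End Slices.

Definition small (A : cantor -> Prop) :=
  ~ exists g : cantor -> cantor, injective g /\ forall c, A (g c).

Lemma perfect_avoid_small p A : perfect p -> small A ->
  exists q, [/\ perfect q, tle q p & forall y, branch q y -> ~ A y].
Proof.
move=> hp hA; have [sp hsp] := perfect_splitting hp.
apply: contrapT => noq.
have meet c : exists y, branch (slice sp c) y /\ A y.
  apply: contrapT => nA; apply: noq; exists (slice sp c).
  split; [exact: slice_perfect hp hsp c | exact: slice_sub hp hsp c |].
  by move=> y hy hAy; apply: nA; exists y.
case: hA; exists (fun c => sval (cid (meet c))); split=> [c c' e|c]; last first.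
  by have [] := svalP (cid (meet c)).
apply/funext => k; apply: contrapT => hk.
have [hc _] := svalP (cid (meet c)); have [hc' _] := svalP (cid (meet c')).
by rewrite e in hc; apply: (slice_disjoint hp hsp hk hc hc').
Qed.

Lemma small_set1 y : small (eq^~ y).
Proof.
case=> g [g_inj gy]; have g01 : g (fun=> false) = g (fun=> true) by rewrite !gy.
by have /(congr1 (fun c => c 0)) := g_inj _ _ g01.
Qed.

Lemma small_image (B : cantor -> Prop) (f : forall w, B w -> cantor) :
  small B -> small (fun y => exists w (h : B w), y = f w h).
Proof.
move=> hB [g [g_inj gf]]; case: hB.
exists (fun c => sval (cid (gf c))); split=> [c c' e|c]; last first.
  by have [] := svalP (cid (gf c)).
apply: g_inj; have [h ->] := svalP (cid (gf c)); have [h' ->] := svalP (cid (gf c')).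
by move: h h'; rewrite e => h h'; rewrite (Prop_irrelevance h h').
Qed.

Lemma small_card_lt (B : pred cantor) : small B -> card_lt {w | B w} cantor.
Proof.
move=> hB; split; first by exists sval; apply: val_inj.
case=> g g_inj; case: hB; exists (fun c => sval (g c)).
by split=> [c c' /val_inj /g_inj //|c]; apply: (svalP (g c)).
Qed.

Lemma well_foundedP (T : Type) (R : T -> T -> Prop) : well_founded R <->
  forall A : T -> Prop, (exists x, A x) -> exists2 z, A z & forall x, A x -> ~ R x z.
Proof.
split=> [wf A [x Ax]|hmin a].
  apply: contrapT => nomin; elim: (wf x) Ax => {}x _ IH Ax.
  by apply: nomin; exists x => // y Ay /IH; apply.
apply: contrapT => na; have [z nz zmin] := hmin (fun x => ~ Acc R x) (ex_intro _ a na).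
by apply: nz; constructor=> y Ryz; apply: contrapT => /zmin; apply.
Qed.

Lemma exists_wf_trichotomous (T : eqType) :
  exists lt : rel T, well_founded lt /\ forall a b, [\/ lt a b, a = b | lt b a].
Proof.
have [R0 R0wo] := well_ordering_principle T.
have R0wc : wo_chain R0 predT by move=> A _; apply: R0wo.
have R0anti := wo_chain_antisymmetric R0wc.
have R0tot := wo_chainW R0wc.
exists (fun a b => R0 a b && (a != b)); split.
  apply/well_foundedP => A [x Ax].
  have [|z [[/asboolP Az zlb] _]] := R0wo [pred x | `[< A x >]].
    by exists x; apply/asboolP.
  exists z => // y Ay /andP[R0yz /eqP]; apply; apply: R0anti => //.
  by rewrite R0yz zlb //; apply/asboolP.
move=> a b; have [-> | _] := eqVneq a b; first exact: Or32.
have /orP[ab | ba] := R0tot a b isT isT.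
  by apply: Or31; rewrite /= ab.
by apply: Or33; rewrite /= ba.
Qed.

Lemma exists_small_initial_order : exists lt : rel cantor,
  [/\ well_founded lt, forall a b, [\/ lt a b, a = b | lt b a] & forall z, small (lt^~ z)].
Proof.
have [lt0 [lt0_wf lt0_tri]] := exists_wf_trichotomous (cantor : eqType).
have [[m0 big_m0] | all_small] := pselect (exists m, ~ small (lt0^~ m)); last first.
  by exists lt0; split=> // z; apply: contrapT => big_z; apply: all_small; exists z.
(* Pull lt0 back along an injection of Cantor space into the least initial
   segment of size c. *)
have [m /contrapT [g [g_inj g_lt]] m_min] :=
  (well_foundedP _).1 lt0_wf (fun m => ~ small (lt0^~ m)) (ex_intro _ m0 big_m0).
exists (fun a b => lt0 (g a) (g b)); split.
- exact: (@wf_inverse_image _ _ (fun a b => lt0 a b) g lt0_wf).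
- move=> a b; case: (lt0_tri (g a) (g b)) => [|/g_inj ->|].
  + exact: Or31.
  + exact: Or32.
  + exact: Or33.
- move=> z [h [h_inj h_lt]]; apply: (m_min (g z)); last exact: g_lt.
  by apply; exists (fun c => g (h c)); split=> [c c' /g_inj /h_inj|c].
Qed.

Lemma wf_rec_exists (T R : Type) (lt : T -> T -> Prop)
    (spec : forall z, (forall w, lt w z -> R) -> R -> Prop) :
  well_founded lt -> (forall z prev, exists r, spec z prev r) ->
  exists F : T -> R, forall z, spec z (fun w _ => F w) (F z).
Proof.
move=> lt_wf ex; pose step z prev := sval (cid (ex z prev)).
exists (Fix lt_wf (fun _ => R) step) => z; rewrite Fix_eq; first exact: svalP.
move=> {}z f g fg; congr step.
by apply: functional_extensionality_dep => w; apply/funext; apply: fg.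
Qed.

Definition decode_tree (z : cantor) : tree := fun s => z (pickle s).

Lemma decode_tree_surj (p : tree) : exists z, decode_tree z = p.
Proof.
exists (fun n => if unpickle n is Some s then `[< p s >] else false).
by apply/funext => s; rewrite /decode_tree pickleK; apply/propext; split=> /asboolP.
Qed.

Lemma tle_branch q p y : tle q p -> branch q y -> branch p y.
Proof. by move=> qp qy n; apply: qp. Qed.

Lemma branch_ttrans q (x t : cantor) : branch q (cadd x t) -> branch (ttrans q t) x.
Proof.
move=> hq n; exists (restr (cadd x t) n); split=> //.
rewrite /seqadd size_mkseq; apply: restr_ext => i hi.
by rewrite nth_mkseq // /cadd; case: (x i); case: (t i).
Qed.

Lemma caddK (x z : cantor) : cadd x (cadd x z) = z.
Proof. by apply/funext => n; rewrite /cadd; case: (x n); case: (z n). Qed.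

Lemma perfect_full : perfect (fun _ => True).
Proof. by split=> //; split=> // s _; exists s; rewrite initsegE prefix_refl. Qed.

Section Construction.
Variables (X : cantor -> Prop) (D : tree -> Prop) (lt : rel cantor).
Hypotheses (D_perfect : forall p, D p -> perfect p)
  (D_dense : forall p, perfect p -> exists q, perfect q /\ tle q p /\ D q)
  (D_ttrans : forall p (t : cantor), perfect p -> (D p <-> D (ttrans p t)))
  (X_not_covered : forall (I : Type) (f : I -> tree), card_lt I cantor ->
     (forall a, D (f a)) -> exists x, X x /\ forall a, ~ branch (f a) x)
  (lt_tri : forall a b, [\/ lt a b, a = b | lt b a])
  (lt_small : forall z, small (lt^~ z)).

(* r = (x_z, q_z).  Along the recursion every earlier q_w lies in D, but
   [stage_exists] has to cope with arbitrary prev, hence the guard D (prev w h).2. *)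
Definition stage z (prev : forall w, lt w z -> cantor * tree) (r : cantor * tree) :=
  [/\ X r.1, D r.2,
    forall w (h : lt w z), D (prev w h).2 -> ~ branch (ttrans (prev w h).2 z) r.1
  & perfect (decode_tree z) ->
    [/\ tle r.2 (decode_tree z), forall w (h : lt w z), ~ branch r.2 (cadd (prev w h).1 w)
      & ~ branch r.2 (cadd r.1 z)]].

Lemma D_inhabited : exists d, D d.
Proof. by have [d [_ [_ Dd]]] := D_dense perfect_full; exists d. Qed.

Lemma stage_point z (prev : forall w, lt w z -> cantor * tree) : exists x, X x /\
  forall w (h : lt w z), D (prev w h).2 -> ~ branch (ttrans (prev w h).2 z) x.
Proof.
have [d Dd] := D_inhabited.
pose f (a : {w | lt w z}) :=
  let q := (prev (sval a) (proj2_sig a)).2 in if `[< D q >] then ttrans q z else ttrans d z.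
have Df a : D (f a).
  rewrite /f; case: asboolP => [Dq|_].
    exact/(D_ttrans _ (D_perfect Dq)).
  exact/(D_ttrans _ (D_perfect Dd)).
have [x [Xx xf]] := X_not_covered (small_card_lt (@lt_small z)) Df.
exists x; split=> // w h Dq; have := xf (exist _ w h).
by rewrite /f /= (asboolT Dq).
Qed.

Lemma stage_tree z (prev : forall w, lt w z -> cantor * tree) x :
  perfect (decode_tree z) -> exists q, [/\ D q, tle q (decode_tree z),
    forall w (h : lt w z), ~ branch q (cadd (prev w h).1 w) & ~ branch q (cadd x z)].
Proof.
move=> hp; have small_prev :=
  small_image (f := fun w (h : lt w z) => cadd (prev w h).1 w) (@lt_small z).
have [q1 [q1p q1le q1prev]] := perfect_avoid_small hp small_prev.
have [q2 [q2p q2le q2x]] := perfect_avoid_small q1p (small_set1 (y := cadd x z)).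
have [q [_ [qle Dq]]] := D_dense q2p.
exists q; split=> //.
- by move=> s /qle /q2le /q1le.
- by move=> w h /(tle_branch qle) /(tle_branch q2le) /q1prev; apply; exists w, h.
- by move=> /(tle_branch qle) /q2x; apply.
Qed.

Lemma stage_exists z prev : exists r, @stage z prev r.
Proof.
have [x [Xx xprev]] := stage_point prev.
have [hp | np] := pselect (perfect (decode_tree z)).
  by have [q [Dq qle qprev qx]] := stage_tree prev x hp; exists (x, q); split.
by have [d Dd] := D_inhabited; exists (x, d); split.
Qed.

Lemma stage_s0 (F : cantor -> cantor * tree) :
  (forall z, @stage z (fun w _ => F w) (F z)) ->
  s0 (fun y => exists w, y = cadd (F w).1 w).
Proof.
move=> hF p hp; have [z ez] := decode_tree_surj p; subst p.
have [_ Dz _ /(_ hp) [zle zprev zself]] := hF z.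
exists (F z).2; split; first exact: D_perfect.
split=> // _ /[swap] -[v ->] hb; case: (lt_tri v z) => [vz | vz | zv].
- exact: zprev vz hb.
- by subst v; apply: zself hb.
- by have [_ _ vprev _] := hF v; apply: vprev zv Dz (branch_ttrans hb).
Qed.

End Construction.

Theorem lemma2p1 (X : cantor -> Prop) (D : tree -> Prop)
  (HDS : forall p, D p -> perfect p)
  (Hdense : forall p, perfect p -> exists q, perfect q /\ tle q p /\ D q)
  (Hinv : forall p (t : cantor), perfect p -> (D p <-> D (ttrans p t)))
  (Hcov : forall (I : Type) (f : I -> tree), card_lt I cantor ->
            (forall a, D (f a)) ->
            exists x, X x /\ forall a, ~ branch (f a) x) :
  exists Y : cantor -> Prop, s0 Y /\
    forall z : cantor, exists x y, X x /\ Y y /\ z = cadd x y.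
Proof.
have [lt [lt_wf lt_tri lt_small]] := exists_small_initial_order.
have [F hF] := wf_rec_exists lt_wf (stage_exists HDS Hdense Hinv Hcov lt_small).
exists (fun y => exists w, y = cadd (F w).1 w); split.
  by apply: (stage_s0 HDS lt_tri); apply: hF.
move=> z; exists (F z).1, (cadd (F z).1 z).
by split; [case: (hF z) | split; [exists z | rewrite caddK]].
Qed.
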